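(* For every $\mathcal{L}_{A_m}^{\Box}$-formula $\varphi$: if $\varphi$ is derivable in the axiom system $\mathsf{K(A_m)}$, then $\varphi$ is $\mathsf{K(A)}$-valid.
   Context: $\mathcal{L}_{A_m}^{\Box}$-formulas are built from a countably infinite set $\mathrm{Var}$ of variables using binary $\to$ and unary $\Box$. Fix $p_0\in\mathrm{Var}$ and define $\overline{0}:=p_0\to p_0$, $\neg\varphi:=\varphi\to\overline{0}$, $\varphi\&\psi:=\neg\varphi\to\psi$, $0\varphi:=\overline{0}$, $(n+1)\varphi:=\varphi\&(n\varphi)$. A $\mathsf{K(A)}$-model $\langle W,R,V\rangle$: nonempty $W$, $R\subseteq W\times W$, $V\colon\mathrm{Var}\times W\to[-r,r]$ for some real $r\ge0$, extended by $V(\varphi\to\psi,x)=V(\psi,x)-V(\varphi,x)$ and $V(\Box\varphi,x)=\inf_{\mathbb{R}}\{V(\varphi,y):Rxy\}$ (empty infimum $=0$). $\varphi$ is $\mathsf{K(A)}$-valid if $V(\varphi,x)\ge0$ for all models and worlds. The axiom system $\mathsf{K(A_m)}$ has axiom schemas (B) $(\varphi\to\psi)\to((\psi\to\chi)\to(\varphi\to\chi))$; (C) $(\varphi\to(\psi\to\chi))\to(\psi\to(\varphi\to\chi))$; (I) $\varphi\to\varphi$; (A) $((\varphi\to\psi)\to\psi)\to\varphi$; (K) $\Box(\varphi\to\psi)\to(\Box\varphi\to\Box\psi)$; (D$_n$) $\Box(n\varphi)\to n\Box\varphi$ for $n\ge2$; and rules (mp) from $\varphi$ and $\varphi\to\psi$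 infer $\psi$; (nec) from $\varphi$ infer $\Box\varphi$; (con$_n$) from $n\varphi$ infer $\varphi$ for $n\ge2$. Derivations are finite sequences of formulas, each an axiom instance or obtained from earlier ones by a rule. *)

From Stdlib Require Import Reals Classical ClassicalEpsilon.
Open Scope R_scope.

Inductive form : Type :=
| Var : nat -> form
| Imp : form -> form -> form
| Box : form -> form.

Definition p0 : form := Var 0.
Definition zero : form := Imp p0 p0.
Definition Neg (a : form) : form := Imp a zero.
Definition Fus (a b : form) : form := Imp (Neg a) b.
Fixpoint mult (n : nat) (a : form) : form :=
  match n with
  | O => zero
  | S k => Fus a (mult k a)
  end.

Definition is_lower_bound (S : R -> Prop) (m : R) : Prop := forall x, S x -> m <= x.
Definition is_glb (S : R -> Prop) (m : R) : Prop :=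
  is_lower_bound S m /\ forall b, is_lower_bound S b -> b <= m.

(* inf_R S, with the convention inf of the empty set = 0.
   (For nonempty S bounded below this is the true infimum; on the values
   arising in K(A)-models the sets are always bounded.) *)
Definition Rinf (S : R -> Prop) : R :=
  epsilon (inhabits 0%R)
    (fun m => ((forall x, ~ S x) /\ m = 0) \/ ((exists x, S x) /\ is_glb S m)).

Record model : Type := {
  W : Type;
  W_inh : inhabited W;
  Rel : W -> W -> Prop;
  V0 : nat -> W -> R;
  bound : R;
  bound_ge0 : 0 <= bound;
  V0_bounded : forall p x, - bound <= V0 p x <= bound
}.

Fixpoint eval (M : model) (a : form) (x : W M) : R :=
  match a with
  | Var p => V0 M p x
  | Imp a b => eval M b x - eval M a x
  | Box a => Rinf (fun v => exists y, Rel M x y /\ v = eval M a y)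
  end.

Definition KA_valid (a : form) : Prop :=
  forall (M : model) (x : W M), 0 <= eval M a x.

Inductive KAm_derivable : form -> Prop :=
| ax_B a b c : KAm_derivable (Imp (Imp a b) (Imp (Imp b c) (Imp a c)))
| ax_C a b c : KAm_derivable (Imp (Imp a (Imp b c)) (Imp b (Imp a c)))
| ax_I a : KAm_derivable (Imp a a)
| ax_A a b : KAm_derivable (Imp (Imp (Imp a b) b) a)
| ax_K a b : KAm_derivable (Imp (Box (Imp a b)) (Imp (Box a) (Box b)))
| ax_D n a : (2 <= n)%nat -> KAm_derivable (Imp (Box (mult n a)) (mult n (Box a)))
| r_mp a b : KAm_derivable a -> KAm_derivable (Imp a b) -> KAm_derivable b
| r_nec a : KAm_derivable a -> KAm_derivable (Box a)
| r_con n a : (2 <= n)%nat -> KAm_derivable (mult n a) -> KAm_derivable a.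

(* The propositional axioms are linear
   identities in the values of their subformulas, and the rules preserve
   nonnegativity.  For the modal part, [Box] is an infimum over successors;
   the infimum exists because every formula takes bounded values (induction on
   formulas, from the bounded valuation), and then [Box] is superadditive,
   which gives (K), and commutes with multiplication by a positive integer,
   which gives (D_n).  At worlds without successors all boxed formulas have
   value 0 and every modal case is trivial. *)

From Pilot Require Import Defs.
From Stdlib Require Import Reals Lra Lia Classical ClassicalEpsilon.
Open Scope R_scope.

Lemma glb_exists (S : R -> Prop) :
  (exists m, is_lower_bound S m) -> (exists x, S x) -> exists g, is_glb S g.
Proof.
  intros [m Hm] [x Hx].
  destruct (completeness (fun y => S (- y))) as [l [Hub Hleast]].
  - exists (- m). intros y Hy. specialize (Hm _ Hy). lra.
  - exists (- x). rewrite Ropp_involutive. exact Hx.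
  - exists (- l). split.
    + intros z Hz. assert (- z <= l) by (apply Hub; rewrite Ropp_involutive; exact Hz).
      lra.
    + intros b Hb. assert (l <= - b) by (apply Hleast; intros y Hy; specialize (Hb _ Hy); lra).
      lra.
Qed.

Lemma Rinf_empty (S : R -> Prop) : (forall x, ~ S x) -> Rinf S = 0.
Proof.
  intros Hempty. unfold Rinf.
  destruct (epsilon_spec (inhabits 0)
              (fun m => ((forall x, ~ S x) /\ m = 0) \/ ((exists x, S x) /\ is_glb S m)))
    as [[_ E] | [[x Hx] _]].
  - exists 0. left. auto.
  - exact E.
  - exfalso. exact (Hempty x Hx).
Qed.

Lemma Rinf_glb (S : R -> Prop) :
  (exists m, is_lower_bound S m) -> (exists x, S x) -> is_glb S (Rinf S).
Proof.
  intros Hbelow Hne. unfold Rinf.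
  destruct (epsilon_spec (inhabits 0)
              (fun m => ((forall x, ~ S x) /\ m = 0) \/ ((exists x, S x) /\ is_glb S m)))
    as [[Hempty _] | [_ Hglb]].
  - destruct (glb_exists S Hbelow Hne) as [g Hg]. exists g. right. auto.
  - exfalso. destruct Hne as [x Hx]. exact (Hempty x Hx).
  - exact Hglb.
Qed.

Section Model.

Variable M : model.

Definition succ_vals (a : form) (x : W M) : R -> Prop :=
  fun v => exists y, Rel M x y /\ v = eval M a y.

Lemma eval_Box (a : form) (x : W M) : eval M (Box a) x = Rinf (succ_vals a x).
Proof. reflexivity. Qed.

Lemma eval_Box_dead (a : form) (x : W M) :
  ~ (exists y, Rel M x y) -> eval M (Box a) x = 0.
Proof.
  intros Hdead. rewrite eval_Box. apply Rinf_empty.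
  intros v [y [Hxy _]]. apply Hdead. exists y. exact Hxy.
Qed.

Lemma eval_bounded (a : form) : exists c, forall x, - c <= eval M a x <= c.
Proof.
  induction a as [p | a [c Hc] b [d Hd] | a [c Hc]].
  - exists (Defs.bound M). intros x. apply V0_bounded.
  - exists (c + d). intros x. simpl. specialize (Hc x). specialize (Hd x). lra.
  - exists c. intros x.
    destruct (classic (exists y, Rel M x y)) as [[y Hxy] | Hdead].
    + rewrite eval_Box.
      assert (Hlow : is_lower_bound (succ_vals a x) (- c)).
      { intros v [z [_ ->]]. specialize (Hc z). lra. }
      destruct (Rinf_glb (succ_vals a x)) as [Hlb Hgreatest].
      * exists (- c). exact Hlow.
      * exists (eval M a y). exists y. auto.
      * assert (Rinf (succ_vals a x) <= eval M a y) by (apply Hlb; exists y; auto).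
        specialize (Hgreatest _ Hlow). specialize (Hc y). lra.
    + rewrite (eval_Box_dead a x Hdead). specialize (Hc x). lra.
Qed.

Lemma succ_vals_bounded_below (a : form) (x : W M) :
  exists m, is_lower_bound (succ_vals a x) m.
Proof.
  destruct (eval_bounded a) as [c Hc]. exists (- c).
  intros v [y [_ ->]]. specialize (Hc y). lra.
Qed.

Lemma eval_Box_le (a : form) (x y : W M) :
  Rel M x y -> eval M (Box a) x <= eval M a y.
Proof.
  intros Hxy. rewrite eval_Box.
  apply (Rinf_glb _ (succ_vals_bounded_below a x)).
  - exists (eval M a y). exists y. auto.
  - exists y. auto.
Qed.

Lemma eval_Box_ge (a : form) (x : W M) (b : R) :
  (exists y, Rel M x y) -> (forall y, Rel M x y -> b <= eval M a y) ->
  b <= eval M (Box a) x.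
Proof.
  intros [y Hxy] Hb. rewrite eval_Box.
  apply (Rinf_glb _ (succ_vals_bounded_below a x)).
  - exists (eval M a y). exists y. auto.
  - intros v [z [Hxz ->]]. exact (Hb z Hxz).
Qed.

Lemma eval_Box_superadditive (a b : form) (x : W M) :
  eval M (Box a) x + eval M (Box (Imp a b)) x <= eval M (Box b) x.
Proof.
  destruct (classic (exists y, Rel M x y)) as [Hsucc | Hdead].
  - apply eval_Box_ge; [exact Hsucc |]. intros y Hxy.
    pose proof (eval_Box_le a x y Hxy).
    pose proof (eval_Box_le (Imp a b) x y Hxy). simpl in *. lra.
  - rewrite !(eval_Box_dead _ x Hdead). lra.
Qed.

Lemma eval_mult (n : nat) (a : form) (x : W M) :
  eval M (mult n a) x = INR n * eval M a x.
Proof.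
  induction n as [| n IH]; simpl mult.
  - simpl. lra.
  - rewrite S_INR. simpl. rewrite IH. lra.
Qed.

Lemma eval_Box_mult_le (n : nat) (a : form) (x : W M) : (0 < n)%nat ->
  eval M (Box (mult n a)) x <= INR n * eval M (Box a) x.
Proof.
  intros Hn. apply lt_0_INR in Hn.
  destruct (classic (exists y, Rel M x y)) as [Hsucc | Hdead].
  - set (m := eval M (Box (mult n a)) x).
    assert (Hm : m = INR n * (m / INR n)) by (field; lra).
    assert (Hdiv : m / INR n <= eval M (Box a) x).
    { apply eval_Box_ge; [exact Hsucc |]. intros y Hxy.
      apply (Rmult_le_reg_l (INR n)); [exact Hn |].
      rewrite <- Hm, <- eval_mult. exact (eval_Box_le (mult n a) x y Hxy). }
    rewrite Hm. apply Rmult_le_compat_l; lra.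
  - rewrite !(eval_Box_dead _ x Hdead). lra.
Qed.

End Model.

Lemma KA_valid_K (a b : form) : KA_valid (Imp (Box (Imp a b)) (Imp (Box a) (Box b))).
Proof.
  intros M x. pose proof (eval_Box_superadditive M a b x). simpl in *. lra.
Qed.

Lemma KA_valid_D (n : nat) (a : form) : (0 < n)%nat ->
  KA_valid (Imp (Box (mult n a)) (mult n (Box a))).
Proof.
  intros Hn M x. pose proof (eval_Box_mult_le M n a x Hn).
  change (0 <= eval M (mult n (Box a)) x - eval M (Box (mult n a)) x).
  rewrite eval_mult. lra.
Qed.

Lemma KA_valid_mp (a b : form) : KA_valid a -> KA_valid (Imp a b) -> KA_valid b.
Proof.
  intros Ha Hab M x. specialize (Ha M x). specialize (Hab M x). simpl in Hab. lra.
Qed.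

Lemma KA_valid_nec (a : form) : KA_valid a -> KA_valid (Box a).
Proof.
  intros Ha M x.
  destruct (classic (exists y, Rel M x y)) as [Hsucc | Hdead].
  - apply eval_Box_ge; [exact Hsucc |]. intros y _. apply Ha.
  - rewrite (eval_Box_dead M a x Hdead). lra.
Qed.

Lemma KA_valid_con (n : nat) (a : form) : (0 < n)%nat ->
  KA_valid (mult n a) -> KA_valid a.
Proof.
  intros Hn Ha M x. specialize (Ha M x). rewrite eval_mult in Ha.
  apply lt_0_INR in Hn.
  destruct (Rle_or_lt 0 (eval M a x)) as [| Hneg]; [assumption |].
  pose proof (Rmult_pos_neg _ _ Hn Hneg). lra.
Qed.

Theorem proposition4p1 : forall phi : form, KAm_derivable phi -> KA_valid phi.
Proof.
  intros phi H. induction H.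
  - intros M x. simpl. lra.
  - intros M x. simpl. lra.
  - intros M x. simpl. lra.
  - intros M x. simpl. lra.
  - apply KA_valid_K.
  - apply KA_valid_D. lia.
  - exact (KA_valid_mp a b IHKAm_derivable1 IHKAm_derivable2).
  - exact (KA_valid_nec a IHKAm_derivable).
  - exact (KA_valid_con n a ltac:(lia) IHKAm_derivable).
Qed.
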